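(* Consider the scalar system $\dot x=u+ax^2$, where $x,u\in\mathbb{R}$ and $a$ is an unknown constant. Let $\lambda>0$, $k>0$, $\gamma_a>0$, $\mu(t)=e^{\lambda t}$ and $s=\mu(t)x$. Apply the controller $$u=-(k+\lambda)x-\hat a x^2,\qquad \dot{\hat a}=\gamma_a\,\mu\, s\, x^2.$$ Then, for all initial conditions $x(0)$ and $\hat a(0)$: 1. $V=\tfrac12 s^2+\tfrac1{2\gamma_a}(a-\hat a)^2$ satisfies $\dot V=-ks^2$. 2. $s$, $\hat a$, $x$ and $u$ are bounded, and $|x(t)|\le C e^{-\lambda t}$ for some constant $C$ depending on the initial conditions. 3. $\lim_{t\to\infty}\hat a(t)$ exists. *)

From Stdlib Require Import Reals.
From Coquelicot Require Import Coquelicot.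
Open Scope R_scope.

Definition mu (lam t : R) : R := exp (lam * t).

Definition sv (lam : R) (x : R -> R) (t : R) : R := mu lam t * x t.

Definition ctrl (k lam : R) (x ah : R -> R) (t : R) : R :=
  - (k + lam) * x t - ah t * (x t) ^ 2.

Definition Vfun (a ga lam : R) (x ah : R -> R) (t : R) : R :=
  / 2 * (sv lam x t) ^ 2 + / (2 * ga) * (a - ah t) ^ 2.

Definition closed_loop_solution (a k lam ga : R) (x ah : R -> R) : Prop :=
  (forall t, 0 <= t ->
     filterlim x (within (fun r => 0 <= r) (locally t)) (locally (x t)) /\
     filterlim ah (within (fun r => 0 <= r) (locally t)) (locally (ah t))) /\
  (forall t, 0 < t ->
     derivable_pt_lim x t (ctrl k lam x ah t + a * (x t) ^ 2) /\
     derivable_pt_lim ah t (ga * mu lam t * sv lam x t * (x t) ^ 2)).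

From Stdlib Require Import Reals Lra Classical.
From Coquelicot Require Import Coquelicot.
Open Scope R_scope.

(** Along the closed loop [V' = -k s^2 <= 0], so [V] never exceeds [V(0)]; this bounds
    [s] and [â], and [x = s e^{-λt}] then decays exponentially.  Moreover
    [â' = γ s^3 e^{-λt} <= γ smax^3 e^{-λt}], so [â + (γ smax^3 / λ) e^{-λt}] is
    nonincreasing and bounded below, hence convergent, and so is [â]. *)

Section FilterlimR.
Context {T : Type} {F : (T -> Prop) -> Prop} {FF : Filter F}.

Lemma filterlim_Rplus (f g : T -> R) (a b : R) :
  filterlim f F (locally a) -> filterlim g F (locally b) ->
  filterlim (fun t => f t + g t) F (locally (a + b)).
Proof. intros Hf Hg; exact (filterlim_comp_2 _ _ _ Hf Hg (filterlim_plus a b)). Qed.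

Lemma filterlim_Rmult (f g : T -> R) (a b : R) :
  filterlim f F (locally a) -> filterlim g F (locally b) ->
  filterlim (fun t => f t * g t) F (locally (a * b)).
Proof. intros Hf Hg; exact (filterlim_comp_2 _ _ _ Hf Hg (filterlim_mult a b)). Qed.

Lemma filterlim_Rminus (f g : T -> R) (a b : R) :
  filterlim f F (locally a) -> filterlim g F (locally b) ->
  filterlim (fun t => f t - g t) F (locally (a - b)).
Proof.
  intros Hf Hg; apply (filterlim_Rplus f (fun t => - g t)); [exact Hf|].
  exact (filterlim_comp _ _ _ _ _ _ _ _ Hg (filterlim_opp b)).
Qed.

Lemma filterlim_Rsqr (f : T -> R) (a : R) :
  filterlim f F (locally a) -> filterlim (fun t => f t ^ 2) F (locally (a ^ 2)).
Proof.
  intros Hf; apply (filterlim_ext (fun t => f t * f t)); [intros; ring|].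
  replace (a ^ 2) with (a * a) by ring; exact (filterlim_Rmult _ _ _ _ Hf Hf).
Qed.

Lemma filterlim_Rscal (c : R) (f : T -> R) (a : R) :
  filterlim f F (locally a) -> filterlim (fun t => c * f t) F (locally (c * a)).
Proof. exact (filterlim_Rmult _ _ _ _ (filterlim_const c)). Qed.

End FilterlimR.

Lemma derive_nonpos_nonincreasing (f df : R -> R) :
  (forall t, 0 < t -> derivable_pt_lim f t (df t)) -> (forall t, 0 < t -> df t <= 0) ->
  forall t1 t2, 0 < t1 -> t1 <= t2 -> f t2 <= f t1.
Proof.
  intros Hd Hn t1 t2 h1 h12.
  destruct (Req_dec t1 t2) as [<-|hne]; [lra|].
  destruct (MVT_gen f t1 t2 df) as [c [hc Heq]];
    rewrite ?Rmin_left, ?Rmax_right in * by lra.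
  - intros y hy; apply is_derive_Reals, Hd; lra.
  - intros y hy; exact (derivable_continuous_pt f y (exist _ (df y) (Hd y ltac:(lra)))).
  - assert (df c <= 0) by (apply Hn; lra); nra.
Qed.

Lemma derive_nonpos_le_initial (f df : R -> R) :
  filterlim f (within (fun r => 0 <= r) (locally 0)) (locally (f 0)) ->
  (forall t, 0 < t -> derivable_pt_lim f t (df t)) -> (forall t, 0 < t -> df t <= 0) ->
  forall t, 0 <= t -> f t <= f 0.
Proof.
  intros Hc Hd Hn t ht.
  destruct (Req_dec t 0) as [->|hne]; [lra|].
  destruct (Rle_or_lt (f t) (f 0)) as [|Hlt]; [assumption|exfalso].
  destruct (proj1 (filterlim_locally _ _) Hc (mkposreal _ (proj2 (Rlt_0_minus _ _) Hlt))) as [d Hnear].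
  set (r := Rmin (d / 2) (t / 2)).
  assert (hr : 0 < r <= t / 2 /\ r < d).
  { unfold r; pose proof (cond_pos d); repeat split;
      [apply Rmin_glb_lt; lra | apply Rmin_r | pose proof (Rmin_l (d / 2) (t / 2)); lra]. }
  assert (Hr : ball 0 d r) by (change (Rabs (r - 0) < d); rewrite Rminus_0_r, Rabs_pos_eq; lra).
  specialize (Hnear r Hr ltac:(lra)); change (Rabs (f r - f 0) < f t - f 0) in Hnear.
  apply Rabs_lt_between in Hnear.
  pose proof (derive_nonpos_nonincreasing f df Hd Hn r t ltac:(lra) ltac:(lra)); lra.
Qed.

Lemma nonincreasing_bounded_below_cvg (g : R -> R) (m : R) :
  (forall t1 t2, 0 < t1 -> t1 <= t2 -> g t2 <= g t1) -> (forall t, 0 < t -> m <= g t) ->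
  exists L, filterlim g (Rbar_locally p_infty) (locally L).
Proof.
  intros Hmono Hlow.
  destruct (completeness (fun y => exists t, 0 < t /\ y = - g t)) as [l [Hub Hleast]].
  { exists (- m); intros y [t [ht ->]]; specialize (Hlow t ht); lra. }
  { exists (- g 1), 1; split; [lra|reflexivity]. }
  exists (- l); apply filterlim_locally; intros eps.
  assert (Hnear : exists t0, 0 < t0 /\ l - eps < - g t0).
  { apply NNPP; intros Hno.
    assert (l <= l - eps) by (apply Hleast; intros y [t [ht ->]]; apply Rnot_lt_le;
                              intros Hgt; apply Hno; exists t; auto).
    pose proof (cond_pos eps); lra. }
  destruct Hnear as [t0 [ht0 Hgt0]].
  exists t0; intros t Ht; change (Rabs (g t - - l) < eps).
  assert (g t <= g t0) by (apply Hmono; lra).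
  assert (- g t <= l) by (apply Hub; exists t; split; [lra|reflexivity]).
  apply Rabs_def1; lra.
Qed.

Lemma exp_neg_cvg0 (lam : R) : 0 < lam ->
  filterlim (fun t => exp (- lam * t)) (Rbar_locally p_infty) (locally 0).
Proof.
  intros Hl.
  apply (is_lim_comp exp (fun t => - lam * t) p_infty 0 m_infty is_lim_exp_m).
  - apply (is_lim_ext (fun t => - lam * t)); [reflexivity|].
    pose proof (is_lim_scal_l (fun t => t) (- lam) p_infty p_infty (is_lim_id _)) as H.
    unfold Rbar_mult, Rbar_mult' in H.
    destruct (Rle_dec 0 (- lam)) as [Hle|]; [lra|exact H].
  - exists 0; intros; discriminate.
Qed.

Lemma mu_mul_exp_neg (lam t : R) : mu lam t * exp (- lam * t) = 1.
Proof. unfold mu; rewrite <- exp_plus, <- exp_0; f_equal; ring. Qed.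

Lemma x_eq_sv_exp_neg (lam : R) (x : R -> R) (t : R) :
  x t = sv lam x t * exp (- lam * t).
Proof. unfold sv; rewrite Rmult_comm, <- Rmult_assoc, (Rmult_comm _ (mu _ _)), mu_mul_exp_neg; ring. Qed.

Lemma exp_neg_le1 (lam t : R) : 0 <= lam -> 0 <= t -> exp (- lam * t) <= 1.
Proof.
  intros hl ht; pose proof (mu_mul_exp_neg lam t); pose proof (exp_pos (- lam * t)).
  pose proof (exp_ineq1_le (lam * t)); assert (0 <= lam * t) by nra.
  unfold mu in *; nra.
Qed.

Lemma Rabs_le_1_plus_sqr (y : R) : Rabs y <= 1 + y ^ 2.
Proof. unfold Rabs; destruct (Rcase_abs y); nra. Qed.

Section ClosedLoop.
Variables (a lam k ga : R) (x ah : R -> R).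
Hypotheses (Hlam : 0 < lam) (Hk : 0 < k) (Hga : 0 < ga).
Hypothesis Hsol : closed_loop_solution a k lam ga x ah.

Let V := Vfun a ga lam x ah.
Let s := sv lam x.

Lemma Vfun_derive (t : R) : 0 < t -> derivable_pt_lim V t (- k * s t ^ 2).
Proof.
  intros ht; destruct (proj2 Hsol t ht) as [Hx Hah].
  apply is_derive_Reals in Hx, Hah; apply is_derive_Reals.
  unfold V, Vfun, s, sv, mu.
  auto_derive.
  - repeat split; eexists; eassumption.
  - replace (Derive (fun y => x y) t) with (ctrl k lam x ah t + a * x t ^ 2)
      by (symmetry; now apply is_derive_unique).
    replace (Derive (fun y => ah y) t) with (ga * mu lam t * sv lam x t * x t ^ 2)
      by (symmetry; now apply is_derive_unique).
    unfold ctrl, sv, mu; field; lra.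
Qed.

Lemma Vfun_right_continuous0 :
  filterlim V (within (fun r => 0 <= r) (locally 0)) (locally (V 0)).
Proof.
  destruct (proj1 Hsol 0 (Rle_refl 0)) as [Hx Hah].
  assert (Hmu : filterlim (mu lam) (within (fun r => 0 <= r) (locally 0)) (locally (mu lam 0))).
  { apply (filterlim_filter_le_1 (F := locally 0)); [apply filter_le_within|].
    apply (ex_derive_continuous (mu lam)); unfold mu; auto_derive; exact I. }
  apply filterlim_Rplus; apply filterlim_Rscal, filterlim_Rsqr.
  - exact (filterlim_Rmult _ _ _ _ Hmu Hx).
  - exact (filterlim_Rminus _ _ _ _ (filterlim_const a) Hah).
Qed.

Let V0 := V 0.

Lemma Vfun_le_initial (t : R) : 0 <= t -> V t <= V0.
Proof.
  apply (derive_nonpos_le_initial V (fun t => - k * s t ^ 2) Vfun_right_continuous0 Vfun_derive).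
  intros; nra.
Qed.

Let smax := 1 + 2 * V0.
Let amax := Rabs a + 1 + 2 * ga * V0.

Lemma Rabs_sv_le (t : R) : 0 <= t -> Rabs (s t) <= smax.
Proof.
  intros ht; pose proof (Vfun_le_initial t ht) as HV; unfold V, Vfun in HV.
  pose proof (Rabs_le_1_plus_sqr (s t)).
  assert (0 <= / (2 * ga) * (a - ah t) ^ 2)
    by (apply Rmult_le_pos; [apply Rlt_le, Rinv_0_lt_compat; lra | apply pow2_ge_0]).
  unfold smax, s in *; lra.
Qed.

Lemma Rabs_ah_le (t : R) : 0 <= t -> Rabs (ah t) <= amax.
Proof.
  intros ht; pose proof (Vfun_le_initial t ht) as HV; unfold V, Vfun in HV.
  assert (Hsq : (a - ah t) ^ 2 <= 2 * ga * V0).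
  { assert (0 <= / 2 * sv lam x t ^ 2) by (apply Rmult_le_pos; [lra | apply pow2_ge_0]).
    replace ((a - ah t) ^ 2) with ((2 * ga) * (/ (2 * ga) * (a - ah t) ^ 2)) by (field; lra).
    apply Rmult_le_compat_l; lra. }
  pose proof (Rabs_le_1_plus_sqr (a - ah t)).
  pose proof (Rabs_triang a (- (a - ah t))) as Htri.
  rewrite Rabs_Ropp in Htri; replace (a + - (a - ah t)) with (ah t) in Htri by ring.
  unfold amax; lra.
Qed.

Lemma Rabs_x_le_exp (t : R) : 0 <= t -> Rabs (x t) <= smax * exp (- lam * t).
Proof.
  intros ht; rewrite (x_eq_sv_exp_neg lam x), Rabs_mult, (Rabs_pos_eq (exp _)) by apply Rlt_le, exp_pos.
  apply Rmult_le_compat_r; [apply Rlt_le, exp_pos | exact (Rabs_sv_le t ht)].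
Qed.

Lemma Rabs_x_le (t : R) : 0 <= t -> Rabs (x t) <= smax.
Proof.
  intros ht; pose proof (Rabs_x_le_exp t ht); pose proof (exp_neg_le1 lam t (Rlt_le _ _ Hlam) ht).
  pose proof (Rabs_sv_le t ht); pose proof (Rabs_pos (s t)); nra.
Qed.

Lemma Rabs_ctrl_le (t : R) : 0 <= t ->
  Rabs (ctrl k lam x ah t) <= (k + lam) * smax + amax * smax ^ 2.
Proof.
  intros ht; unfold ctrl.
  pose proof (Rabs_x_le t ht); pose proof (Rabs_ah_le t ht).
  pose proof (Rabs_pos (x t)); pose proof (Rabs_pos (ah t)).
  assert (Rabs (x t) ^ 2 <= smax ^ 2) by (apply pow_maj_Rabs; rewrite Rabs_Rabsolu; lra).
  eapply Rle_trans; [apply Rabs_triang|].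
  rewrite Rabs_Ropp, !Rabs_mult, Rabs_Ropp, (Rabs_pos_eq (k + lam)), <- RPow_abs by lra.
  pose proof (pow2_ge_0 (Rabs (x t))); nra.
Qed.

Lemma ah_derivative_le (t : R) : 0 < t ->
  ga * mu lam t * s t * x t ^ 2 <= ga * smax ^ 3 * exp (- lam * t).
Proof.
  intros ht.
  replace (ga * mu lam t * s t * x t ^ 2)
    with (ga * s t ^ 3 * exp (- lam * t) * (mu lam t * exp (- lam * t)))
    by (unfold s; rewrite (x_eq_sv_exp_neg lam x t); ring).
  rewrite mu_mul_exp_neg, Rmult_1_r.
  apply Rmult_le_compat_r; [apply Rlt_le, exp_pos|].
  apply Rmult_le_compat_l; [lra|].
  apply pow_maj_Rabs, Rabs_sv_le; lra.
Qed.

Lemma ah_cvg : exists L, filterlim ah (Rbar_locally p_infty) (locally L).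
Proof.
  set (c := ga * smax ^ 3 / lam).
  set (g := fun t => ah t + c * exp (- lam * t)).
  assert (Hg : forall t, 0 < t ->
    derivable_pt_lim g t (ga * mu lam t * s t * x t ^ 2 - c * lam * exp (- lam * t))).
  { intros t ht; apply is_derive_Reals.
    pose proof (proj2 (is_derive_Reals _ _ _) (proj2 (proj2 Hsol t ht))) as Hah.
    unfold g; auto_derive; [eexists; exact Hah|].
    replace (Derive (fun y => ah y) t) with (ga * mu lam t * sv lam x t * x t ^ 2)
      by (symmetry; now apply is_derive_unique).
    unfold s; ring. }
  assert (Hg_nonpos : forall t, 0 < t ->
    ga * mu lam t * s t * x t ^ 2 - c * lam * exp (- lam * t) <= 0).
  { intros t ht; pose proof (ah_derivative_le t ht).
    replace (c * lam) with (ga * smax ^ 3) by (unfold c; field; lra); lra. }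
  assert (Hg_low : forall t, 0 < t -> - amax <= g t).
  { intros t ht; pose proof (Rabs_ah_le t (Rlt_le _ _ ht)) as Hb; apply Rabs_le_between in Hb.
    assert (0 <= c * exp (- lam * t)).
    { apply Rmult_le_pos; [|apply Rlt_le, exp_pos].
      pose proof (Rabs_sv_le 0 (Rle_refl 0)); pose proof (Rabs_pos (s 0)).
      unfold c; apply Rmult_le_pos; [apply Rmult_le_pos; [lra | apply pow_le; lra]|].
      apply Rlt_le, Rinv_0_lt_compat; lra. }
    unfold g; lra. }
  destruct (nonincreasing_bounded_below_cvg g (- amax)
              (derive_nonpos_nonincreasing g _ Hg Hg_nonpos) Hg_low) as [L HL].
  exists (L - c * 0).
  apply (filterlim_ext (fun t => g t - c * exp (- lam * t))); [intros; unfold g; ring|].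
  exact (filterlim_Rminus _ _ _ _ HL (filterlim_Rscal c _ _ (exp_neg_cvg0 lam Hlam))).
Qed.

End ClosedLoop.

Theorem mainTheorem3 (a lam k ga : R) (x ah : R -> R) :
  0 < lam -> 0 < k -> 0 < ga ->
  closed_loop_solution a k lam ga x ah ->
  (forall t, 0 < t ->
     derivable_pt_lim (Vfun a ga lam x ah) t (- k * (sv lam x t) ^ 2)) /\
  (exists M, forall t, 0 <= t ->
     Rabs (sv lam x t) <= M /\ Rabs (ah t) <= M /\ Rabs (x t) <= M /\
     Rabs (ctrl k lam x ah t) <= M) /\
  (exists C, forall t, 0 <= t -> Rabs (x t) <= C * exp (- lam * t)) /\
  (exists L, filterlim ah (Rbar_locally p_infty) (locally L)).
Proof.
  intros Hlam Hk Hga Hsol.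
  set (smax := 1 + 2 * Vfun a ga lam x ah 0).
  set (amax := Rabs a + 1 + 2 * ga * Vfun a ga lam x ah 0).
  split; [intros; apply (Vfun_derive a lam k ga x ah); assumption|].
  split; [|split].
  - exists (smax + amax + ((k + lam) * smax + amax * smax ^ 2)); intros t ht.
    assert (Rabs (sv lam x t) <= smax) by (apply (Rabs_sv_le a lam k ga x ah); assumption).
    assert (Rabs (ah t) <= amax) by (apply (Rabs_ah_le a lam k ga x ah); assumption).
    assert (Rabs (x t) <= smax) by (apply (Rabs_x_le a lam k ga x ah); assumption).
    assert (Rabs (ctrl k lam x ah t) <= (k + lam) * smax + amax * smax ^ 2)
      by (apply (Rabs_ctrl_le a lam k ga x ah); assumption).
    pose proof (Rabs_pos (sv lam x t)); pose proof (Rabs_pos (ah t)).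
    pose proof (Rabs_pos (ctrl k lam x ah t)).
    repeat split; lra.
  - exists smax; intros; apply (Rabs_x_le_exp a lam k ga x ah); assumption.
  - apply (ah_cvg a lam k ga x ah); assumption.
Qed.
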